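(* Let $\mathcal F=(F,\rightarrowtail)$ be an argumentation framework. If $A\subseteq F$ is tenable, then $A$ is contained in some weakly complete extension of $\mathcal F$.
   Context: An argumentation framework (AF) $\mathcal F=(F,\rightarrowtail)$ consists of a (possibly infinite) set $F$ of arguments and a binary attack relation $\rightarrowtail\subseteq F\times F$. An argument $a$ attacks a set $B$ if $a\rightarrowtail b$ for some $b\in B$. $A^+=\{x\in F:\exists a\in A,\ a\rightarrowtail x\}$. A set is conflict-free if none of its elements attacks one of its elements. For $A,B\subseteq F$, $A$ is as cogent as $B$, written $A\succeq B$, if $A$ is conflict-free and every $b\in B$ that attacks $A$ belongs to $A^+$. We write $B\succ A$ if $B\succeq A$ and not $A\succeq B$. Tenability game: a tenability dispute on $\mathcal F$ is a finite sequence $(X_0,\dots,X_n)$ of subsets of $F$, where even-indexed sets are moves of the Proponent (Pro) and odd-indexed sets are moves of the Opponent (Opp), such that (1) each $X_i$ is conflict-free; (2) $X_i\subseteq X_{i+2}$ whenever both are defined; (3) $X_1$ and each $X_{i+2}\setminus X_i$ are finite; (4) $X_{i+1}\succeq X_i$ for every $i$; (5) every Opp move satisfies $X_{2k+1}\succ X_{2k}$. Play starts with $X_0=A$ and players alternately extend the sequence so that it remains a tenability dispute. A dispute is concluded if it has no legal extension; a concluded dispute is won by the player who made its last move. A strategy for Pro assigns to each dispute ending with an Opp move a legal Pro reply; it is winning if every concluded dispute starting with $X_0=A$ in which Pro follows it is won by Pro (infinite plays count as wins for Pro). $A$ is tenable if Pro has a winning strategy starting with $X_0=A$. A weakly complete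 labeling is a map $L:F\to\{\mathtt{in},\mathtt{out},\mathtt{undec}\}$ such that for every $a\in F$: if $L(a)=\mathtt{in}$ then no attacker of $a$ is labeled $\mathtt{in}$; if $L(a)=\mathtt{out}$ then some attacker of $a$ is labeled $\mathtt{in}$; if $L(a)=\mathtt{undec}$ then some attacker of $a$ is labeled $\mathtt{undec}$ and no attacker of $a$ is labeled $\mathtt{in}$. A set is a weakly complete extension if it equals $\{a:L(a)=\mathtt{in}\}$ for some weakly complete labeling $L$. *)

From Stdlib Require Import List Arith.
Import ListNotations.

Section AF.
Context {T : Type} (att : T -> T -> Prop).

Definition set := T -> Prop.
Definition subset (A B : set) : Prop := forall x, A x -> B x.
Definition finite_set (A : set) : Prop := exists l : list T, forall x, A x -> In x l.

Definition attacks_set (a : T) (B : set) : Prop := exists b, B b /\ att a b.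
Definition plus (A : set) : set := fun x => exists a, A a /\ att a x.
Definition conflict_free (A : set) : Prop := forall a b, A a -> A b -> ~ att a b.

Definition cogent (A B : set) : Prop :=
  conflict_free A /\ forall b, B b -> attacks_set b A -> plus A b.
Definition strictly_cogent (B A : set) : Prop := cogent B A /\ ~ cogent A B.

Definition emptyset : set := fun _ => False.
Definition nthX (d : list set) (i : nat) : set := nth i d emptyset.

(* tenability dispute (X_0, ..., X_n) represented as the list [X_0; ...; X_n] *)
Definition is_dispute (d : list set) : Prop :=
  d <> [] /\
  (forall i, i < length d -> conflict_free (nthX d i)) /\
  (forall i, i + 2 < length d -> subset (nthX d i) (nthX d (i + 2))) /\
  (1 < length d -> finite_set (nthX d 1)) /\
  (forall i, i + 2 < length d ->
     finite_set (fun x => nthX d (i + 2) x /\ ~ nthX d i x)) /\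
  (forall i, i + 1 < length d -> cogent (nthX d (i + 1)) (nthX d i)) /\
  (forall k, 2 * k + 1 < length d ->
     strictly_cogent (nthX d (2 * k + 1)) (nthX d (2 * k))).

Definition starts_with (A : set) (d : list set) : Prop := nthX d 0 = A.

Definition concluded (d : list set) : Prop :=
  is_dispute d /\ forall X, ~ is_dispute (d ++ [X]).

(* the last move X_n is Pro's iff n is even iff length d is odd *)
Definition won_by_Pro (d : list set) : Prop := Nat.odd (length d) = true.

(* Pro strategies: maps a dispute ending with an Opp move to Pro's reply *)
Definition strategy := list set -> set.

Definition follows (s : strategy) (d : list set) : Prop :=
  forall k, 2 * k + 2 < length d -> nthX d (2 * k + 2) = s (firstn (2 * k + 2) d).

Definition legal_strategy (A : set) (s : strategy) : Prop :=
  forall d, is_dispute d -> starts_with A d -> follows s d ->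
    Nat.even (length d) = true -> is_dispute (d ++ [s d]).

Definition winning_strategy (A : set) (s : strategy) : Prop :=
  legal_strategy A s /\
  forall d, concluded d -> starts_with A d -> follows s d -> won_by_Pro d.

Definition tenable (A : set) : Prop :=
  is_dispute [A] /\ exists s, winning_strategy A s.

Inductive label := lin | lout | lundec.

Definition weakly_complete_labeling (L : T -> label) : Prop :=
  forall a,
    (L a = lin -> forall b, att b a -> L b <> lin) /\
    (L a = lout -> exists b, att b a /\ L b = lin) /\
    (L a = lundec -> (exists b, att b a /\ L b = lundec) /\
                     (forall b, att b a -> L b <> lin)).

Definition weakly_complete_extension (E : set) : Prop :=
  exists L, weakly_complete_labeling L /\ forall a, E a <-> L a = lin.

End AF.

(* Starting from A, keep adding every argument that is neither in nor attacked
   by the current set but all of whose attackers it attacks, taking unions at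
   limits; the fixed point U of this (Bourbaki-Witt) tower has no such argument
   left, so labeling U in, U^+ out and the rest undec is weakly complete.

   What must be shown is that an addable x never attacks A. Every set in the
   tower defends its arguments outside A in a well-founded way ([grounded]).
   If x attacked A, Opp could play x; whenever a grounded argument y of Opp
   attacks Pro's set, Opp adds y together with grounded counter-attackers of
   Pro's new arguments, and Pro's legal reply must attack y by some p, which is
   in turn attacked by a grounded argument below y. Since Pro always has a
   legal reply, this descent never stops, contradicting well-foundedness. *)

From Stdlib Require Import List Arith Lia Classical ClassicalEpsilon.
Import ListNotations.

Lemma finite_choice {T : Type} (R : T -> T -> Prop) (P Q : T -> Prop) (l : list T) :
  (forall b, In b l -> Q b -> exists z, P z /\ R z b) ->
  exists l', (forall z, In z l' -> P z) /\
    forall b, In b l -> Q b -> exists z, In z l' /\ R z b.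
Proof.
  induction l as [|b0 l IH]; intros H.
  - exists []. split; [intros z []|intros b []].
  - destruct IH as [l' [Hl'P Hl'R]]; [intros b Hb; apply H; right; exact Hb|].
    destruct (classic (Q b0)) as [Hq|Hq].
    + destruct (H b0 (or_introl eq_refl) Hq) as [z [Hz Hzb]].
      exists (z :: l'). split.
      * intros z' [<-|Hz']; auto.
      * intros b [<-|Hb] Hqb; [exists z; split; [left|]; auto|].
        destruct (Hl'R b Hb Hqb) as [z' [Hz' Hz'b]]. exists z'; split; [right|]; auto.
    + exists l'. split; [exact Hl'P|]. intros b [<-|Hb] Hqb; [contradiction|auto].
Qed.

Section Disputes.
Context {T : Type} (att : T -> T -> Prop).
Implicit Types (X : @set T) (d : list (@set T)).

Lemma nthX_app_lt d X i : i < length d -> nthX (d ++ [X]) i = nthX d i.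
Proof. intro H; unfold nthX; apply app_nth1; exact H. Qed.

Lemma nthX_app_length d X : nthX (d ++ [X]) (length d) = X.
Proof. unfold nthX; rewrite app_nth2, Nat.sub_diag by lia; reflexivity. Qed.

Lemma is_dispute_snoc d X :
  is_dispute att d -> conflict_free att X ->
  (2 <= length d -> subset (nthX d (length d - 2)) X) ->
  (length d = 1 -> finite_set X) ->
  (2 <= length d -> finite_set (fun t => X t /\ ~ nthX d (length d - 2) t)) ->
  cogent att X (nthX d (length d - 1)) ->
  (forall k, 2 * k + 1 = length d -> strictly_cogent att X (nthX d (2 * k))) ->
  is_dispute att (d ++ [X]).
Proof.
  intros [Hne [Hcf [Hsub [Hf1 [Hfin [Hco Hst]]]]]] HcfX HsubX Hf1X HfinX HcoX HstX.
  assert (Hl : length (d ++ [X]) = length d + 1) by (rewrite length_app; reflexivity).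
  assert (Hd : length d <> 0) by (destruct d; [congruence | simpl; lia]).
  split; [| split; [| split; [| split; [| split; [| split]]]]]; rewrite ?Hl.
  - destruct d; [congruence | discriminate].
  - intros i Hi. destruct (Nat.eq_dec i (length d)) as [->|Hne'].
    + rewrite nthX_app_length; exact HcfX.
    + rewrite nthX_app_lt by lia; apply Hcf; lia.
  - intros i Hi. destruct (Nat.eq_dec (i + 2) (length d)) as [He|Hne'].
    + rewrite He, nthX_app_length, nthX_app_lt by lia.
      replace i with (length d - 2) by lia. apply HsubX; lia.
    + rewrite !nthX_app_lt by lia; apply Hsub; lia.
  - intros Hi. destruct (Nat.eq_dec 1 (length d)) as [He|Hne'].
    + rewrite He, nthX_app_length. apply Hf1X; lia.
    + rewrite nthX_app_lt by lia; apply Hf1; lia.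
  - intros i Hi. destruct (Nat.eq_dec (i + 2) (length d)) as [He|Hne'].
    + rewrite He, nthX_app_length, nthX_app_lt by lia.
      replace i with (length d - 2) by lia. apply HfinX; lia.
    + rewrite !nthX_app_lt by lia; apply Hfin; lia.
  - intros i Hi. destruct (Nat.eq_dec (i + 1) (length d)) as [He|Hne'].
    + rewrite He, nthX_app_length, nthX_app_lt by lia.
      replace i with (length d - 1) by lia. exact HcoX.
    + rewrite !nthX_app_lt by lia; apply Hco; lia.
  - intros k Hk. destruct (Nat.eq_dec (2 * k + 1) (length d)) as [He|Hne'].
    + rewrite He, nthX_app_length, nthX_app_lt by lia. apply HstX; lia.
    + rewrite !nthX_app_lt by lia; apply Hst; lia.
Qed.

Lemma is_dispute_pro_grows d m :
  is_dispute att d -> 2 * m < length d -> subset (nthX d 0) (nthX d (2 * m)).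
Proof.
  intros Hd. induction m as [|m IH]; intros Hm t Ht; [exact Ht|].
  destruct Hd as [_ [_ [Hsub _]]].
  replace (2 * S m) with (2 * m + 2) by lia.
  apply Hsub; [lia|]. apply IH; [lia|exact Ht].
Qed.

Lemma is_dispute_pro_finite_growth d m :
  is_dispute att d -> 2 * m < length d ->
  finite_set (fun t => nthX d (2 * m) t /\ ~ nthX d 0 t).
Proof.
  intros Hd. induction m as [|m IH]; intros Hm.
  - exists []. intros t [H1 H2]. contradiction.
  - destruct IH as [l2 Hl2]; [lia|].
    destruct Hd as [_ [_ [_ [_ [Hfin _]]]]].
    destruct (Hfin (2 * m)) as [l1 Hl1]; [lia|].
    exists (l1 ++ l2). intros t [H1 H2].
    replace (2 * S m) with (2 * m + 2) in H1 by lia.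
    apply in_or_app. destruct (classic (nthX d (2 * m) t)); [right|left]; auto.
Qed.

Lemma follows_snoc (s : @strategy T) d X :
  follows s d -> (forall k, 2 * k + 2 = length d -> X = s d) -> follows s (d ++ [X]).
Proof.
  intros Hf HX k Hk. rewrite length_app in Hk; simpl in Hk.
  rewrite firstn_app.
  destruct (Nat.eq_dec (2 * k + 2) (length d)) as [He|Hne].
  - rewrite He, nthX_app_length, Nat.sub_diag, firstn_all, app_nil_r.
    apply (HX k); lia.
  - rewrite nthX_app_lt by lia. replace (2 * k + 2 - length d) with 0 by lia.
    rewrite app_nil_r. apply Hf; lia.
Qed.

End Disputes.

Section Grounded.
Context {T : Type} (att : T -> T -> Prop).
Implicit Types (A E F : @set T).

Definition addable E x : Prop :=
  ~ E x /\ ~ plus att E x /\ forall p, att p x -> plus att E p.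

Inductive grounded A E : T -> Prop :=
| grounded_intro y :
    (forall p, att p y -> exists z, att z p /\ (A z \/ (E z /\ grounded A E z))) ->
    grounded A E y.

(* The automatic eliminator has no induction hypothesis below the nested
   [exists]/[\/], hence this hand-written one. *)
Fixpoint grounded_ind' A E (P : T -> Prop)
  (step : forall y, (forall p, att p y ->
            exists z, att z p /\ (A z \/ (E z /\ grounded A E z /\ P z))) -> P y)
  y (H : grounded A E y) {struct H} : P y :=
  match H with
  | grounded_intro _ _ y h => step y (fun p hp =>
      match h p hp with
      | ex_intro _ z (conj hz hor) =>
          ex_intro _ z (conj hz
            (match hor with
             | or_introl ha => or_introl ha
             | or_intror (conj he hg) =>
                 or_intror (conj he (conj hg (grounded_ind' A E P step z hg)))
             end))
      end)
  end.

Lemma grounded_mono A E F y : subset E F -> grounded A E y -> grounded A F y.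
Proof.
  intros HEF. revert y. apply grounded_ind'. intros y H. constructor. intros p hp.
  destruct (H p hp) as [z [hz [ha | [he [_ hF]]]]]; exists z; split; auto.
Qed.

Definition grounded_extension A E : Prop :=
  subset A E /\ conflict_free att E /\ forall y, E y -> ~ A y -> grounded A E y.

End Grounded.

Section AddableArgumentsAreSafe.
Context {T : Type} (att : T -> T -> Prop).
Variables (A E : @set T) (x : T) (s : @strategy T).
Hypothesis s_legal : legal_strategy att A s.
Hypothesis A_start : is_dispute att [A].
Hypothesis E_grounded : grounded_extension att A E.
Hypothesis x_addable : addable att E x.

Definition pool : @set T := fun t => (E t /\ ~ A t) \/ t = x.

Lemma pool_grounded t : pool t -> grounded att A E t.
Proof.
  destruct E_grounded as [_ [_ HgE]]. destruct x_addable as [_ [_ Hxdef]].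
  intros [[Ht Hnt]| ->]; [auto|].
  constructor. intros p hp. destruct (Hxdef p hp) as [z [Hz Hzp]].
  exists z; split; [exact Hzp|]. destruct (classic (A z)); auto.
Qed.

Lemma A_not_attacks_pool b t : A b -> pool t -> ~ att b t.
Proof.
  destruct E_grounded as [HAE [HcfE _]]. destruct x_addable as [_ [Hxnp _]].
  intros Hb [[Ht _]| ->] Hbt; [exact (HcfE b t (HAE b Hb) Ht Hbt)|].
  apply Hxnp. exists b; auto.
Qed.

Lemma pool_conflict_free : conflict_free att pool.
Proof.
  destruct E_grounded as [HAE [HcfE HgE]]. destruct x_addable as [_ [Hxnp Hxdef]].
  intros u v [[Hu Hnu]| ->] [[Hv Hnv]| ->] Huv.
  - exact (HcfE u v Hu Hv Huv).
  - apply Hxnp. exists u; auto.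
  - destruct (HgE v Hv Hnv) as [v' Hv'].
    destruct (Hv' x Huv) as [z [Hzx [Hz|[Hz _]]]]; apply Hxnp; exists z; auto.
  - apply Hxnp. destruct (Hxdef x Huv) as [z [Hz Hzx]]. exists z; auto.
Qed.

Definition pro_position m (d : list (@set T)) : Prop :=
  is_dispute att d /\ starts_with A d /\ follows s d /\ length d = 2 * m + 1 /\
  forall k, 2 * k + 1 < length d -> subset (nthX d (2 * k + 1)) pool.

Lemma pro_position_start : pro_position 0 [A].
Proof.
  split; [exact A_start|split; [reflexivity|split; [|split; [reflexivity|]]]];
    intros k Hk; simpl in Hk; lia.
Qed.

Lemma pro_position_last m d :
  pro_position m d -> subset A (nthX d (2 * m)) /\ conflict_free att (nthX d (2 * m)).
Proof.
  intros [Hd [Hs [_ [Hlen _]]]]. split.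
  - rewrite <- Hs. apply (is_dispute_pro_grows att); [exact Hd|lia].
  - destruct Hd as [_ [Hcf _]]. apply Hcf; lia.
Qed.

Lemma pro_position_attacker_not_in_A m d p z :
  pro_position m d -> nthX d (2 * m) p -> att z p -> ~ A z.
Proof.
  intros Hpos Hp Hzp Hz. destruct (pro_position_last m d Hpos) as [HAX HcfX].
  exact (HcfX z p (HAX z Hz) Hp Hzp).
Qed.

(* Opp repeats her previous move, adds [y], and adds counter-attackers (taken
   from [pool], by groundedness) against the finitely many arguments Pro has
   added beyond [A] that attack [pool]. *)
Lemma opp_reply m d y b :
  pro_position m d -> pool y -> nthX d (2 * m) b -> att y b ->
  ~ plus att (nthX d (2 * m)) y ->
  exists Y, is_dispute att (d ++ [Y]) /\ subset Y pool /\ Y y.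
Proof.
  intros Hpos Hy Hb Hyb Hnp. pose proof Hpos as [Hd [Hs [_ [Hlen Hopp]]]].
  set (X := nthX d (2 * m)) in *.
  destruct (is_dispute_pro_finite_growth att d m Hd) as [l Hl]; [lia|].
  rewrite Hs in Hl.
  destruct (finite_choice att pool
              (fun b => X b /\ ~ A b /\ exists t, pool t /\ att b t) l)
    as [Def [HDef_pool HDef_att]].
  { intros b' _ [Hb' [Hnb' [t [Ht Hb't]]]].
    destruct (pool_grounded t Ht) as [t' Ht'].
    destruct (Ht' b' Hb't) as [z [Hzb' [Hz|[Hz _]]]].
    - exfalso; exact (pro_position_attacker_not_in_A m d b' z Hpos Hb' Hzb' Hz).
    - exists z; split; [|exact Hzb']. left; split; [exact Hz|].
      exact (pro_position_attacker_not_in_A m d b' z Hpos Hb' Hzb'). }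
  set (Y := fun t => (2 <= length d /\ nthX d (length d - 2) t) \/ t = y \/ In t Def).
  assert (HY_pool : subset Y pool).
  { intros t [[H2 Ht]|[->|Ht]]; auto.
    replace (length d - 2) with (2 * (m - 1) + 1) in Ht by lia.
    apply (Hopp (m - 1)); [lia|exact Ht]. }
  assert (HY_cf : conflict_free att Y).
  { intros u v Hu Hv. apply pool_conflict_free; auto. }
  assert (HY_cogent : cogent att Y X).
  { split; [exact HY_cf|]. intros b' Hb' [t [Ht Hb't]].
    assert (Hnb' : ~ A b') by (intro Ha; exact (A_not_attacks_pool b' t Ha (HY_pool t Ht) Hb't)).
    destruct (HDef_att b') as [z [Hz Hzb']].
    - apply Hl; split; assumption.
    - split; [exact Hb'|split; [exact Hnb'|]]. exists t; auto.
    - exists z; split; [right; right; exact Hz|exact Hzb']. }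
  exists Y. split; [|split; [exact HY_pool|right; left; reflexivity]].
  apply is_dispute_snoc.
  - exact Hd.
  - exact HY_cf.
  - intros H2 t Ht. left; auto.
  - intros H1. exists (y :: Def). intros t [[H2 _]|[->|Ht]]; [lia|left|right]; auto.
  - intros H2. exists (y :: Def).
    intros t [[[_ Ht] | [->|Ht]] Hnt]; [contradiction|left|right]; auto.
  - replace (length d - 1) with (2 * m) by lia. exact HY_cogent.
  - intros k Hk. replace k with m by lia. split; [exact HY_cogent|].
    intros [_ HX]. apply Hnp, HX; [right; left; reflexivity|]. exists b; auto.
Qed.

Lemma pro_reply m d Y y :
  pro_position m d -> is_dispute att (d ++ [Y]) -> subset Y pool -> Y y ->
  attacks_set att y (nthX d (2 * m)) ->
  let d' := (d ++ [Y]) ++ [s (d ++ [Y])] in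
  pro_position (m + 1) d' /\ plus att (nthX d' (2 * (m + 1))) y.
Proof.
  intros [Hd [Hs [Hf [Hlen Hopp]]]] Hd1 HY Hy [b [Hb Hyb]] d'.
  set (d1 := d ++ [Y]) in *.
  assert (Hl1 : length d1 = 2 * m + 2) by (subst d1; rewrite length_app; simpl; lia).
  assert (Hf1 : follows s d1) by (apply follows_snoc; [exact Hf|intros k Hk; lia]).
  assert (Hd' : is_dispute att d').
  { apply s_legal; [exact Hd1| |exact Hf1|].
    - unfold starts_with, d1. rewrite nthX_app_lt by lia. exact Hs.
    - rewrite Hl1. apply Nat.even_spec. exists (m + 1). lia. }
  assert (E2 : nthX d' (2 * m + 2) = s d1) by (rewrite <- Hl1; apply nthX_app_length).
  assert (E1 : nthX d' (2 * m + 1) = Y).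
  { unfold d'. rewrite nthX_app_lt by lia. subst d1. rewrite <- Hlen. apply nthX_app_length. }
  assert (E0 : nthX d' (2 * m) = nthX d (2 * m)).
  { unfold d'. rewrite nthX_app_lt by lia. unfold d1. rewrite nthX_app_lt by lia. reflexivity. }
  replace (2 * (m + 1)) with (2 * m + 2) by lia. split.
  - split; [exact Hd'|split; [|split; [|split]]].
    + unfold starts_with, d'. rewrite nthX_app_lt by lia. unfold d1.
      rewrite nthX_app_lt by lia. exact Hs.
    + apply follows_snoc; [exact Hf1|reflexivity].
    + unfold d'. rewrite length_app; simpl; lia.
    + intros k Hk. unfold d' in Hk. rewrite length_app in Hk; simpl in Hk.
      destruct (Nat.eq_dec k m) as [->|Hne]; [rewrite E1; exact HY|].
      unfold d'. rewrite nthX_app_lt by lia. subst d1.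
      rewrite nthX_app_lt by lia. apply Hopp; lia.
  - destruct Hd' as [_ [_ [Hsub [_ [_ [Hco _]]]]]].
    destruct (Hco (2 * m + 1)) as [_ Hc]; [unfold d'; rewrite length_app; simpl; lia|].
    replace (2 * m + 1 + 1) with (2 * m + 2) in Hc by lia. rewrite E1 in Hc.
    apply Hc; [exact Hy|]. exists b. split; [|exact Hyb].
    rewrite <- E0 in Hb. apply Hsub; [unfold d'; rewrite length_app; simpl; lia|exact Hb].
Qed.

Lemma pro_counterattacks m d y :
  pro_position m d -> pool y -> attacks_set att y (nthX d (2 * m)) ->
  exists m' d', pro_position m' d' /\ plus att (nthX d' (2 * m')) y.
Proof.
  intros Hpos Hy Hatt.
  destruct (classic (plus att (nthX d (2 * m)) y)) as [Hp|Hnp]; [exists m, d; auto|].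
  pose proof Hatt as [b [Hb Hyb]].
  destruct (opp_reply m d y b Hpos Hy Hb Hyb Hnp) as [Y [Hd1 [HY HYy]]].
  exact (ex_intro _ (m + 1) (ex_intro _ _ (pro_reply m d Y y Hpos Hd1 HY HYy Hatt))).
Qed.

Lemma grounded_pool_never_attacks_pro y :
  grounded att A E y -> pool y ->
  forall m d, pro_position m d -> ~ attacks_set att y (nthX d (2 * m)).
Proof.
  revert y. apply (grounded_ind' att A E (fun y => pool y -> forall m d,
    pro_position m d -> ~ attacks_set att y (nthX d (2 * m)))).
  intros y IH Hy m d Hpos Hatt.
  destruct (pro_counterattacks m d y Hpos Hy Hatt) as [m' [d' [Hpos' [p [Hp Hpy]]]]].
  destruct (IH p Hpy) as [z [Hzp Hz]].
  pose proof (pro_position_attacker_not_in_A m' d' p z Hpos' Hp Hzp) as HnzA.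
  destruct Hz as [HzA | [HzE [_ HzP]]]; [contradiction|].
  apply (HzP (or_introl (conj HzE HnzA)) m' d' Hpos'). exists p; auto.
Qed.

Lemma addable_not_attacks_base a : A a -> ~ att x a.
Proof.
  intros Ha Hxa.
  apply (grounded_pool_never_attacks_pro x (pool_grounded x (or_intror eq_refl))
           (or_intror eq_refl) 0 [A] pro_position_start).
  exists a; auto.
Qed.

End AddableArgumentsAreSafe.

Section Tower.
Context {T : Type} (f : @set T -> @set T) (A : @set T).
Hypothesis f_inflationary : forall E, subset E (f E).
Hypothesis f_ext : forall E F, subset E F -> subset F E -> subset (f E) (f F).

Definition chain (C : @set T -> Prop) : Prop :=
  forall E F, C E -> C F -> subset E F \/ subset F E.

(* [A] is joined in so that the empty chain also yields a tower element. *)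
Definition chain_union (C : @set T -> Prop) : @set T :=
  fun t => A t \/ exists E, C E /\ E t.

Inductive tower : @set T -> Prop :=
| tower_base : tower A
| tower_step E : tower E -> tower (f E)
| tower_union C : (forall E, C E -> tower E) -> chain C -> tower (chain_union C).

Lemma tower_base_subset E : tower E -> subset A E.
Proof. induction 1; intros t Ht; [exact Ht|apply f_inflationary; auto|left; exact Ht]. Qed.

Definition extreme c : Prop :=
  forall E, tower E -> subset E c -> ~ subset c E -> subset (f E) c.

Lemma extreme_split c :
  tower c -> extreme c -> forall E, tower E -> subset E c \/ subset (f c) E.
Proof.
  intros Hc Hext E HE. induction HE as [|E HE IH|C HC IH Hch].
  - left. exact (tower_base_subset c Hc).
  - destruct IH as [H|H].
    + destruct (classic (subset c E)) as [H'|H']; [right; apply f_ext|left; apply Hext]; auto.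
    + right. intros t Ht. apply f_inflationary, H, Ht.
  - destruct (classic (exists E, C E /\ subset (f c) E)) as [[E [HE H]]|Hn].
    + right. intros t Ht. right. exists E; auto.
    + left. intros t [Ht|[E [HE Ht]]]; [exact (tower_base_subset c Hc t Ht)|].
      destruct (IH E HE) as [H|H]; [auto|].
      exfalso; apply Hn; exists E; auto.
Qed.

Lemma tower_extreme c : tower c -> extreme c.
Proof.
  induction 1 as [|c Hc IH|C HC IH Hch]; intros E HE H1 H2.
  - exfalso; apply H2, (tower_base_subset E HE).
  - destruct (extreme_split c Hc IH E HE) as [H|H]; [|exfalso; apply H2, H].
    destruct (classic (subset c E)) as [H'|H']; [apply f_ext; auto|].
    intros t Ht. apply f_inflationary, (IH E HE H H' t Ht).
  - destruct (classic (exists t, (exists F, C F /\ F t) /\ ~ E t))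
      as [[t [[F [HF Ht]] Hnt]]|Hn].
    + destruct (extreme_split F (HC F HF) (IH F HF) E HE) as [H|H].
      * intros t' Ht'. right. exists F; split; [exact HF|].
        apply (IH F HF E HE H); [intro HFE; apply Hnt, HFE, Ht | exact Ht'].
      * exfalso; apply Hnt, H, f_inflationary, Ht.
    + exfalso; apply H2. intros t [Ht|Ht]; [exact (tower_base_subset E HE t Ht)|].
      apply NNPP; intro Hnt; apply Hn; exists t; auto.
Qed.

Lemma tower_chain : chain tower.
Proof.
  intros E c HE Hc.
  destruct (extreme_split c Hc (tower_extreme c Hc) E HE) as [H|H]; [left; exact H|].
  right. intros t Ht; apply H, f_inflationary, Ht.
Qed.

Lemma tower_top : tower (chain_union tower).
Proof. apply tower_union; [auto|exact tower_chain]. Qed.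

Lemma tower_top_closed : subset (f (chain_union tower)) (chain_union tower).
Proof.
  intros t Ht. right. exists (f (chain_union tower)).
  split; [exact (tower_step _ tower_top)|exact Ht].
Qed.

End Tower.

Section Construction.
Context {T : Type} (att : T -> T -> Prop).
Implicit Types (A E F U : @set T).

Definition add_addable E : @set T := fun t => E t \/ addable att E t.

Lemma add_addable_inflationary E : subset E (add_addable E).
Proof. intros t Ht; left; exact Ht. Qed.

Lemma add_addable_ext E F : subset E F -> subset F E -> subset (add_addable E) (add_addable F).
Proof.
  intros HEF HFE t [Ht|[Hn [Hp Hdef]]]; [left; auto|right].
  split; [|split].
  - intro Ht; apply Hn, HFE, Ht.
  - intros [a [Ha Hat]]. apply Hp. exists a; auto.
  - intros p hp. destruct (Hdef p hp) as [a [Ha Hap]]. exists a; auto.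
Qed.

Lemma grounded_extension_base A : conflict_free att A -> grounded_extension att A A.
Proof. intros HcfA. split; [intros t Ht; exact Ht|split; [exact HcfA|contradiction]]. Qed.

Section AddAddable.
Variables (A E : @set T) (s : @strategy T).
Hypothesis s_legal : legal_strategy att A s.
Hypothesis A_start : is_dispute att [A].
Hypothesis E_grounded : grounded_extension att A E.

Lemma add_addable_conflict_free : conflict_free att (add_addable E).
Proof.
  destruct E_grounded as [HAE [HcfE HgE]].
  intros u v [Hu|Hu] [Hv|Hv] Huv.
  - exact (HcfE u v Hu Hv Huv).
  - destruct Hv as [_ [Hpv _]]. apply Hpv; exists u; auto.
  - pose proof Hu as [_ [Hpu _]].
    destruct (classic (A v)) as [HvA|HvA].
    + exact (addable_not_attacks_base att A E u s s_legal A_start E_grounded Hu v HvA Huv).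
    + destruct (HgE v Hv HvA) as [v' Hv'].
      destruct (Hv' u Huv) as [z [Hzu [Hz|[Hz _]]]]; apply Hpu; exists z; auto.
  - destruct Hu as [_ [Hpu _]]. destruct Hv as [_ [_ Hdefv]]. apply Hpu, Hdefv, Huv.
Qed.

Lemma grounded_extension_add_addable : grounded_extension att A (add_addable E).
Proof.
  pose proof E_grounded as [HAE [_ HgE]].
  split; [intros t Ht; left; auto|split; [exact add_addable_conflict_free|]].
  intros y [Hy|[_ [_ Hdefy]]] HyA.
  - apply (grounded_mono att A E); [apply add_addable_inflationary|auto].
  - constructor. intros p hp.
    destruct (Hdefy p hp) as [z [Hz Hzp]]. exists z; split; [exact Hzp|].
    destruct (classic (A z)) as [HzA|HzA]; [left; exact HzA|right; split; [left; exact Hz|]].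
    apply (grounded_mono att A E); [apply add_addable_inflationary|auto].
Qed.

End AddAddable.

Lemma grounded_extension_chain_union A C :
  conflict_free att A -> (forall E, C E -> grounded_extension att A E) -> chain C ->
  grounded_extension att A (chain_union A C).
Proof.
  intros HcfA HC Hch.
  assert (Hsub : forall E, C E -> subset E (chain_union A C))
    by (intros E HE t Ht; right; exists E; auto).
  split; [intros t Ht; left; exact Ht|split].
  - intros u v [Hu|[Eu [HEu Hu]]] [Hv|[Ev [HEv Hv]]] Huv.
    + exact (HcfA u v Hu Hv Huv).
    + destruct (HC Ev HEv) as [HA [Hcf _]]. exact (Hcf u v (HA u Hu) Hv Huv).
    + destruct (HC Eu HEu) as [HA [Hcf _]]. exact (Hcf u v Hu (HA v Hv) Huv).
    + destruct (Hch Eu Ev HEu HEv) as [H|H].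
      * destruct (HC Ev HEv) as [_ [Hcf _]]. exact (Hcf u v (H u Hu) Hv Huv).
      * destruct (HC Eu HEu) as [_ [Hcf _]]. exact (Hcf u v Hu (H v Hv) Huv).
  - intros y [Hy|[Ey [HEy Hy]]] HyA; [contradiction|].
    destruct (HC Ey HEy) as [_ [_ Hg]].
    apply (grounded_mono att A Ey); [apply Hsub|]; auto.
Qed.

Lemma tower_grounded_extension A s E :
  legal_strategy att A s -> is_dispute att [A] ->
  tower add_addable A E -> grounded_extension att A E.
Proof.
  intros Hs HA. assert (HcfA : conflict_free att A).
  { destruct HA as [_ [Hcf _]]. apply (Hcf 0). simpl; lia. }
  induction 1 as [|E _ IH|C _ IH Hch].
  - exact (grounded_extension_base A HcfA).
  - exact (grounded_extension_add_addable A E s Hs HA IH).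
  - exact (grounded_extension_chain_union A C HcfA IH Hch).
Qed.

Definition labeling_of U (t : T) : label :=
  if excluded_middle_informative (U t) then lin
  else if excluded_middle_informative (plus att U t) then lout else lundec.

Lemma labeling_of_lin U t : labeling_of U t = lin <-> U t.
Proof.
  unfold labeling_of.
  destruct (excluded_middle_informative (U t)), (excluded_middle_informative (plus att U t));
    split; easy.
Qed.

Lemma labeling_of_lout U t : labeling_of U t = lout <-> ~ U t /\ plus att U t.
Proof.
  unfold labeling_of.
  destruct (excluded_middle_informative (U t)), (excluded_middle_informative (plus att U t));
    split; easy.
Qed.

Lemma labeling_of_lundec U t : labeling_of U t = lundec <-> ~ U t /\ ~ plus att U t.
Proof.
  unfold labeling_of.
  destruct (excluded_middle_informative (U t)), (excluded_middle_informative (plus att U t));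
    split; easy.
Qed.

(* An [undec] argument with no [undec] attacker would be addable. *)
Lemma weakly_complete_extension_of_no_addable U :
  conflict_free att U -> (forall t, ~ addable att U t) -> weakly_complete_extension att U.
Proof.
  intros HcfU Hnadd. exists (labeling_of U). split; [|intros a; symmetry; apply labeling_of_lin].
  intros a. rewrite labeling_of_lin, labeling_of_lout, labeling_of_lundec.
  assert (Hnot_in : forall b, att b a -> ~ plus att U a -> labeling_of U b <> lin).
  { intros b Hba Hpa Hb. apply labeling_of_lin in Hb. apply Hpa. exists b; auto. }
  split; [|split].
  - intros Ha b Hba Hb. apply labeling_of_lin in Hb. exact (HcfU b a Hb Ha Hba).
  - intros [_ [b [Hb Hba]]]. exists b. split; [exact Hba|]. apply labeling_of_lin, Hb.
  - intros [Ha Hpa]. split; [|intros b Hba; apply Hnot_in; auto].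
    apply NNPP; intro Hno. apply (Hnadd a). split; [exact Ha|split; [exact Hpa|]].
    intros p hp. apply NNPP; intro Hpp. apply Hno. exists p. split; [exact hp|].
    apply labeling_of_lundec. split; [|exact Hpp].
    intro Hp; apply Hpa; exists p; auto.
Qed.

End Construction.

Theorem mainTheorem13 (T : Type) (att : T -> T -> Prop) (A : T -> Prop) :
  tenable att A ->
  exists E : T -> Prop, weakly_complete_extension att E /\ (forall x, A x -> E x).
Proof.
  intros [HA [s [Hs _]]].
  pose proof (add_addable_inflationary att) as Hinfl.
  pose proof (add_addable_ext att) as Hext.
  set (U := chain_union A (tower (add_addable att) A)).
  assert (HU : tower (add_addable att) A U) by exact (tower_top _ A Hinfl Hext).
  destruct (tower_grounded_extension att A s U Hs HA HU) as [HAU [HcfU _]].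
  exists U. split; [|exact HAU].
  apply weakly_complete_extension_of_no_addable; [exact HcfU|].
  intros t Ht. apply (proj1 Ht).
  apply (tower_top_closed _ A Hinfl Hext). right; exact Ht.
Qed.
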